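(* Let $d<0<r<u$ be real numbers with $(1+u)(1+d)=1$, let $S_0>0$, let $T\ge 1$ be an integer, and set $q=\frac{r-d}{u-d}\in(0,1)$. Let $\mathcal{S}=\{S_0(1+u)^k(1+d)^l : k,l\in\{0,1,2,\dots\}\}=\{S_0(1+u)^j: j\in\mathbb{Z}\}$ be the (extended, infinite) state space. Let $f:\mathcal{S}\to\mathbb{R}$ be the payoff of a European-style derivative with maturity $T$, and assume that either $\sum_{K\in\mathcal{S}}|f(K)|<\infty$ or $f\ge 0$. Define the discounted value process of the replication strategy by $$V_f(s,T)=f(s),\qquad V_f(s,t)=q\,V_f\big(s(1+u),t+1\big)+(1-q)\,V_f\big(s(1+d),t+1\big)\quad (s\in\mathcal{S},\ 0\le t<T),$$ equivalently $V_f(s,t)=\sum_{x=0}^{T-t}\binom{T-t}{x}q^x(1-q)^{T-t-x}f\big(s(1+u)^x(1+d)^{T-t-x}\big)$. Then for every $t\in\{0,1,\dots,T\}$, $$\sum_{s\in\mathcal{S}}V_f(s,t)=\sum_{K\in\mathcal{S}}f(K).$$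
   Context: This is the Cox–Ross–Rubinstein binomial model with constant one-period risk-free rate $r$ and up/down returns $u,d$, but with the state space extended to all points $S_0(1+u)^j$, $j\in\mathbb{Z}$, at every time. All values are expressed in numeraire (discounted) units: a payoff of one unit at time $T$ and the amount of wealth needed at time $t$ to replicate it are measured in the time-$T$ and time-$t$ numeraire respectively, so that one-period replication costs of a unit payoff contingent on an up-move (resp. down-move) are $q$ (resp. $1-q$). $V_f(s,t)$ is the (numeraire-denominated) wealth required at time $t$ in state $s$ to replicate the payoff $f(S_T)$ at time $T$; when $f\ge0$ the sums may be $+\infty$. *)

From mathcomp Require Import all_boot all_order all_algebra.
From mathcomp Require Import all_classical all_reals all_analysis.
Set Implicit Arguments. Unset Strict Implicit. Unset Printing Implicit Defensive.
Import Order.TTheory GRing.Theory Num.Theory.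
Local Open Scope classical_set_scope.
Local Open Scope ring_scope.

Definition state_space (R : realType) (S0 u d : R) : set R :=
  [set S0 * (1 + u) ^+ k * (1 + d) ^+ l | k in [set: nat] & l in [set: nat]].

Fixpoint value_togo (R : realType) (q u d : R) (f : R -> R) (n : nat) (s : R) : R :=
  match n with
  | 0 => f s
  | n'.+1 => q * value_togo q u d f n' (s * (1 + u))
             + (1 - q) * value_togo q u d f n' (s * (1 + d))
  end.

Definition Vf (R : realType) (q u d : R) (f : R -> R) (T : nat) (s : R) (t : nat) : R :=
  value_togo q u d f (T - t) s.

(* For g >= 0 this is the
   (possibly infinite) sum \esum g; for absolutely summable g it is the usual sum. *)
Definition ssum (R : realType) (D : set R) (g : R -> R) : \bar R :=
  (\esum_(x in D) (Num.max (g x) 0)%:E - \esum_(x in D) (Num.max (- g x) 0)%:E)%E.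

From mathcomp Require Import all_boot all_order all_algebra.
From mathcomp Require Import all_classical all_reals all_analysis.
From mathcomp Require Import ring lra.
Import Order.TTheory GRing.Theory Num.Theory.
Local Open Scope classical_set_scope.
Local Open Scope ring_scope.

(* Since (1 + u)(1 + d) = 1, the moves s |-> s(1 + u) and s |-> s(1 + d) are
   mutually inverse bijections of the state space, so a sum over the state
   space does not change when the summand is shifted by one move.  One step of
   backward induction averages two such shifts with weights q and 1 - q, hence
   preserves the total sum of a nonnegative value function.  A general payoff
   is split as f = f^+ - f^-; the value process is linear in the payoff, and
   f^- has finite total mass under either hypothesis, so the two totals can be
   subtracted. *)

Lemma esumZl (R : realType) (T : choiceType) (D : set T) (c : R) (g : T -> R) :
  0 <= c ->
  (\esum_(x in D) (c * g x)%:E = c%:E * \esum_(x in D) (g x)%:E)%E.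
Proof.
move=> c0; rewrite /esum -ereal_supZl //; last first.
  by apply/set0P; exists 0%E, set0; rewrite ?fsbig_set0 //; exact: fsets_set0.
congr ereal_sup; apply/seteqP; split => y.
- move=> [A [finA AD] <-]; exists (\sum_(x \in A) (g x)%:E)%E.
    by exists A.
  by rewrite !fsumEFin // -EFinM (fsbig_distrr _ _ _ finA).
- move=> [_ [A [finA AD] <-] <-]; exists A => //.
  by rewrite !fsumEFin // -EFinM (fsbig_distrr _ _ _ finA).
Qed.

Lemma reindex_esum_mulr (R : realType) (K : comNzRingType) (D : set K) (a b : K)
    (g : K -> \bar R) :
  a * b = 1 ->
  (forall x, D x -> D (x * a)) -> (forall x, D x -> D (x * b)) ->
  (\esum_(x in D) g (x * a)%R = \esum_(x in D) g x)%E.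
Proof.
move=> ab Da Db; rewrite [RHS](reindex_esum D D (fun x => x * a) g) //; split.
- by move=> x /Da.
- by move=> x y _ _ /(congr1 ( *%R^~ b)); rewrite -!mulrA ab !mulr1.
- move=> y Dy; exists (y * b); first exact: Db.
  by rewrite -mulrA [b * a]mulrC ab mulr1.
Qed.

Lemma state_space_mulr_up (R : realType) (S0 u d x : R) :
  state_space S0 u d x -> state_space S0 u d (x * (1 + u)).
Proof.
move=> [k _ [l _ <-]]; exists k.+1 => //; exists l => //.
by rewrite exprS; ring.
Qed.

Lemma state_space_mulr_down (R : realType) (S0 u d x : R) :
  state_space S0 u d x -> state_space S0 u d (x * (1 + d)).
Proof.
move=> [k _ [l _ <-]]; exists k => //; exists l.+1 => //.
by rewrite exprS; ring.
Qed.

Section ValueToGo.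
Variables (R : realType) (q u d : R).
Hypotheses (q_ge0 : 0 <= q) (q_le1 : q <= 1).

Lemma value_togo_ge0 (g : R -> R) n x :
  (forall y, 0 <= g y) -> 0 <= value_togo q u d g n x.
Proof.
move=> g0; elim: n x => [|n IH] x /=; first exact: g0.
by rewrite addr_ge0 // mulr_ge0 // subr_ge0.
Qed.

Lemma value_togoB (g h : R -> R) n x :
  value_togo q u d (g \- h) n x
  = value_togo q u d g n x - value_togo q u d h n x.
Proof. by elim: n x => [|n IH] x //=; rewrite !IH; ring. Qed.

Variable D : set R.
Hypotheses (ud : (1 + u) * (1 + d) = 1)
  (D_up : forall x, D x -> D (x * (1 + u)))
  (D_down : forall x, D x -> D (x * (1 + d))).

Lemma esum_value_togo (g : R -> R) n : (forall y, 0 <= g y) ->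
  (\esum_(x in D) (value_togo q u d g n x)%:E = \esum_(x in D) (g x)%:E)%E.
Proof.
move=> g0; elim: n => [|n IH] //=.
set W := value_togo q u d g n.
have W0 x : 0 <= W x by exact: value_togo_ge0.
have du : (1 + d) * (1 + u) = 1 by rewrite mulrC.
under eq_esum do rewrite EFinD.
rewrite esumD; last 2 first.
- by move=> x _; rewrite lee_fin mulr_ge0.
- by move=> x _; rewrite lee_fin mulr_ge0 // subr_ge0.
rewrite !esumZl ?subr_ge0 //.
rewrite (@reindex_esum_mulr _ _ D _ _ (fun x => (W x)%:E) ud) //.
rewrite (@reindex_esum_mulr _ _ D _ _ (fun x => (W x)%:E) du) //.
by rewrite IH -ge0_muleDl ?lee_fin ?subr_ge0 // -EFinD addrC subrK mul1e.
Qed.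

End ValueToGo.

Lemma adde_eq_sube (R : realDomainType) (p n a b : \bar R) :
  n \is a fin_num -> b \is a fin_num -> (p + b = n + a -> p - n = a - b)%E.
Proof.
move: n b => [n| |] [b| |] // _ _.
case: p a => [p| |] [a| |] //= /(congr1 fine) /= h.
by congr EFin; lra.
Qed.

Lemma ssum_subr (R : realType) (D : set R) (g h : R -> R) :
  (forall x, 0 <= g x) -> (forall x, 0 <= h x) ->
  (\esum_(x in D) (h x)%:E < +oo)%E ->
  ssum D (g \- h) = (\esum_(x in D) (g x)%:E - \esum_(x in D) (h x)%:E)%E.
Proof.
(* Pointwise (g - h)^+ + h = (g - h)^- + g, and (g - h)^- <= h is summable. *)
move=> g0 h0 h_fin; rewrite /ssum; apply: adde_eq_sube.
- rewrite ge0_fin_numE; last first.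
    by apply: esum_ge0 => x _; rewrite lee_fin funrneg_ge0.
  apply: le_lt_trans h_fin; apply: le_esum => x _.
  by rewrite lee_fin ge_max h0 andbT /=; have := g0 x; lra.
- by rewrite ge0_fin_numE // esum_ge0 // => x _; rewrite lee_fin.
rewrite -!esumD => [|x _|x _|x _|x _];
  rewrite ?lee_fin ?funrneg_ge0 ?funrpos_ge0 //.
apply: eq_esum => x _; rewrite -!EFinD; congr EFin.
have := congr1 (fun F => F x) (funrposBneg (g \- h)).
by rewrite /= !fctE /funrpos /funrneg; lra.
Qed.

Lemma esum_funrneg_lty (R : realType) (T : choiceType) (D : set T)
    (f : T -> R) :
  summable D (fun x => (f x)%:E) \/ (forall x, D x -> 0 <= f x) ->
  (\esum_(x in D) (f^\- x)%:E < +oo)%E.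
Proof.
case=> [f_sum | f_ge0].
- apply: le_lt_trans f_sum; apply: le_esum => x _.
  by rewrite abse_EFin lee_fin ge_max normr_ge0 andbT -normrN ler_norm.
- rewrite esum1 ?ltry // => x Dx.
  by rewrite (ge0_funrnegE f_ge0) // inE.
Qed.

Theorem proposition1 (R : realType) (d r u S0 : R) (T : nat) (f : R -> R) :
  d < 0 -> 0 < r -> r < u -> (1 + u) * (1 + d) = 1 -> 0 < S0 -> (1 <= T)%N ->
  (summable (state_space S0 u d) (fun K => (f K)%:E)
   \/ (forall K, state_space S0 u d K -> 0 <= f K)) ->
  let q := (r - d) / (u - d) in
  forall t : nat, (t <= T)%N ->
    ssum (state_space S0 u d) (fun s => Vf q u d f T s t)
    = ssum (state_space S0 u d) f.
Proof.
move=> d_lt0 r_gt0 r_lt_u ud _ _ f_sum q t _.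
have q_ge0 : 0 <= q by rewrite /q divr_ge0; lra.
have q_le1 : q <= 1 by rewrite /q ler_pdivrMr ?mul1r; lra.
have esumV g : (forall y, 0 <= g y) ->
    (\esum_(x in state_space S0 u d) (value_togo q u d g (T - t) x)%:E
     = \esum_(x in state_space S0 u d) (g x)%:E)%E.
  move=> g0; apply: esum_value_togo => // x.
  - exact: state_space_mulr_up.
  - exact: state_space_mulr_down.
have -> : (fun s => Vf q u d f T s t) =
    value_togo q u d f^\+ (T - t) \- value_togo q u d f^\- (T - t).
  by apply/funext => s; rewrite /Vf /= -value_togoB -[f in LHS]funrposBneg.
rewrite ssum_subr ?esumV ?funrpos_ge0 ?funrneg_ge0 //.
- by move=> x; apply: value_togo_ge0 => // y; exact: funrpos_ge0.
- by move=> x; apply: value_togo_ge0 => // y; exact: funrneg_ge0.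
- exact: esum_funrneg_lty.
Qed.
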